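(* Consider the problem $\min f(x)$ subject to $x\in\mathcal{F}\cap\mathcal{Z}\cap X$, where $\mathcal{F}=\{x:g(x)\le0\}$, and the penalized problem $\min\{P(x;\varepsilon): x\in X\cap\mathcal{Z}\}$ with $P(x;\varepsilon)=f(x)+\frac1\varepsilon\sum_{i=1}^m\max\{0,g_i(x)\}$. Suppose EMFCQ (see context) holds. Then for any $\varepsilon>0$, every Clarke stationary point $\bar x$ of the penalized problem with $\bar x\in\mathcal{F}\cap\mathcal{Z}\cap X$ is a KKT stationary point of the constrained problem.
   Context: $\{1,\dots,n\}=I^c\cup I^z$, $I^c\cap I^z=\emptyset$; $v_c=(v_i)_{i\in I^c}$, $v_z=(v_i)_{i\in I^z}$. $l,u\in\mathbb{R}^n$ finite, $l_i<u_i$, $l_i,u_i\in\mathbb{Z}$ for $i\in I^z$; $X=\{x:l\le x\le u\}$, $\mathcal{Z}=\{x: x_i\in\mathbb{Z}\ \forall i\in I^z\}$. $f$ and $g=(g_1,\dots,g_m)$ are Lipschitz continuous w.r.t. the continuous variables: $|h(x)-h(y)|\le L\|x-y\|$ for $h\in\{f,g_1,\dots,g_m\}$ whenever $x_z=y_z$. A vector in $\mathbb{Z}^p$ is primitive if the gcd of its components is 1. For $x\in X\cap\mathcal{Z}$: $D^z(x)=\{d\in\mathbb{Z}^n: d_i=0\ (i\in I^c),\ d_z\text{ primitive},\ x+d\in X\cap\mathcal{Z}\}$, $\mathcal{B}^z(x)=\{x+d: d\in D^z(x)\}$, $D^c(x)=\{s: s_i=0\ (i\in I^z),\ s_i\ge0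 \text{ if } i\in I^c,x_i=l_i,\ s_i\le0\text{ if } i\in I^c,x_i=u_i\}$. For $h$ Lipschitz w.r.t. continuous variables and $s$ with $s_z=0$: $h^{Cl}_{x_c}(x;s)=\limsup_{y_c\to x_c,\,y_z=x_z,\,t\downarrow0}\frac{h(y+ts)-h(y)}{t}$, $\partial_c h(x)=\{v: v_z=0,\ h^{Cl}_{x_c}(x;s)\ge s^\top v\ \forall s \text{ with } s_z=0\}$. Clarke stationary point of the penalized problem: $x\in X\cap\mathcal{Z}$ with $P^{Cl}_{x_c}(x;s)\ge0$ for all $s\in D^c(x)$ and $P(x;\varepsilon)\le P(y;\varepsilon)$ for all $y\in\mathcal{B}^z(x)$. KKT stationary point of the constrained problem: $x^*\in\mathcal{F}\cap\mathcal{Z}\cap X$ for which there is $\lambda\in\mathbb{R}^m$ with $\lambda\ge0$, $\lambda^\top g(x^* )=0$, $\max\{\xi^\top s: \xi\in\partial_c f(x^* )+\sum_{i=1}^m\lambda_i\partial_c g_i(x^* )\}\ge0$ for every $s\in D^c(x^* )$ (Minkowski sum of sets), and $f(x^* )\le f(x)$ for all $x\in\mathcal{B}^z(x^* )\cap\mathcal{F}$. EMFCQ: for every $x\in(X\cap\mathcal{Z})\setminus\operatorname{int}\mathcal{F}$, either (i) there is $s\in D^c(x)$ with $\xi^\top s<0$ for all $\xi\in\partial_c g_i(x)$ and all $i$ with $g_i(x)\ge0$; or (ii) there is $\bar d\in D^z(x)$ with $\sum_{i}\max\{0,g_i(x+\bar d)\}<\sum_{i}\max\{0,g_i(x)\}$.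 *)

From HB Require Import structures.
From mathcomp Require Import all_boot all_order all_algebra.
From mathcomp Require Import all_classical all_reals ereal.
Set Implicit Arguments. Unset Strict Implicit. Unset Printing Implicit Defensive.
Import Order.TTheory GRing.Theory Num.Theory.
Local Open Scope classical_set_scope.
Local Open Scope ring_scope.

Section MINLP.
Context {R : realType} {n m : nat}.
(* vectors of R^n are functions 'I_n -> R; Ic is the set of continuous
   indices I^c, and its complement ~: Ic is I^z. *)
Local Notation vec := ('I_n -> R).

Definition vadd (x y : vec) : vec := fun i => x i + y i.
Definition vsub (x y : vec) : vec := fun i => x i - y i.
Definition vscale (t : R) (x : vec) : vec := fun i => t * x i.
Definition vdot (x y : vec) : R := \sum_i x i * y i.
Definition vnorm (x : vec) : R := Num.sqrt (\sum_i x i ^+ 2).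
Definition ivec (d : 'I_n -> int) : vec := fun i => (d i)%:~R.

Definition inX (l u : vec) (x : vec) : Prop := forall i, l i <= x i <= u i.
Definition inZ (Ic : {set 'I_n}) (x : vec) : Prop :=
  forall i, i \notin Ic -> x i \is a Num.int.

Definition lipschitz_c (Ic : {set 'I_n}) (L : R) (h : vec -> R) : Prop :=
  forall x y, (forall i, i \notin Ic -> x i = y i) ->
    `|h x - h y| <= L * vnorm (vsub x y).

Definition primitive_z (Ic : {set 'I_n}) (d : 'I_n -> int) : Prop :=
  \big[gcdz/0%R]_(i in ~: Ic) d i = 1.

Definition Dz (Ic : {set 'I_n}) (l u : vec) (x : vec) (d : 'I_n -> int) : Prop :=
  (forall i, i \in Ic -> d i = 0) /\ primitive_z Ic d /\
  inX l u (vadd x (ivec d)) /\ inZ Ic (vadd x (ivec d)).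

Definition Bz (Ic : {set 'I_n}) (l u : vec) (x y : vec) : Prop :=
  exists d, Dz Ic l u x d /\ y = vadd x (ivec d).

Definition Dc (Ic : {set 'I_n}) (l u : vec) (x s : vec) : Prop :=
  (forall i, i \notin Ic -> s i = 0) /\
  (forall i, i \in Ic -> x i = l i -> 0 <= s i) /\
  (forall i, i \in Ic -> x i = u i -> s i <= 0).

(* Clarke directional derivative w.r.t. the continuous variables:
   limsup_{y_c -> x_c, y_z = x_z, t downarrow 0} (h(y+ts)-h(y))/t
   = inf_{del>0} sup {quotient : |y-x| < del, y_z = x_z, 0 < t < del}. *)
Definition clarke_dd (Ic : {set 'I_n}) (h : vec -> R) (x s : vec) : \bar R :=
  ereal_inf [set ereal_sup
     [set ((h (vadd yt.1 (vscale yt.2 s)) - h yt.1) / yt.2)%:E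
        | yt in [set yt : vec * R | vnorm (vsub yt.1 x) < del /\
                  (forall i, i \notin Ic -> yt.1 i = x i) /\
                  0 < yt.2 < del]]
   | del in [set del : R | 0 < del]].

Definition clarke_subdiff (Ic : {set 'I_n}) (h : vec -> R) (x v : vec) : Prop :=
  (forall i, i \notin Ic -> v i = 0) /\
  forall s, (forall i, i \notin Ic -> s i = 0) ->
    ((vdot s v)%:E <= clarke_dd Ic h x s)%E.

Definition viol (g : 'I_m -> vec -> R) (x : vec) : R :=
  \sum_i Num.max 0 (g i x).

Definition penalty (f : vec -> R) (g : 'I_m -> vec -> R) (eps : R) (x : vec) : R :=
  f x + eps^-1 * viol g x.

Definition feasible (g : 'I_m -> vec -> R) (x : vec) : Prop :=
  forall i, g i x <= 0.

Definition in_int_feasible (g : 'I_m -> vec -> R) (x : vec) : Prop :=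
  exists r, 0 < r /\ forall y, vnorm (vsub y x) < r -> feasible g y.

Definition clarke_stationary (Ic : {set 'I_n}) (l u : vec) (P : vec -> R) (x : vec) : Prop :=
  inX l u x /\ inZ Ic x /\
  (forall s, Dc Ic l u x s -> (0%:E <= clarke_dd Ic P x s)%E) /\
  (forall y, Bz Ic l u x y -> P x <= P y).

Definition KKT_stationary (Ic : {set 'I_n}) (l u : vec) (f : vec -> R)
    (g : 'I_m -> vec -> R) (x : vec) : Prop :=
  feasible g x /\ inZ Ic x /\ inX l u x /\
  exists lam : 'I_m -> R,
    (forall i, 0 <= lam i) /\ \sum_i lam i * g i x = 0 /\
    (forall s, Dc Ic l u x s ->
       (* max { xi^T s : xi in partial f(x) + sum_i lam_i partial g_i(x) } >= 0 *)
       exists (xi0 : vec) (xis : 'I_m -> vec),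
         clarke_subdiff Ic f x xi0 /\
         (forall i, clarke_subdiff Ic (g i) x (xis i)) /\
         0 <= vdot (fun j => xi0 j + \sum_i lam i * xis i j) s) /\
    (forall y, Bz Ic l u x y -> feasible g y -> f x <= f y).

Definition EMFCQ (Ic : {set 'I_n}) (l u : vec) (g : 'I_m -> vec -> R) : Prop :=
  forall x, inX l u x -> inZ Ic x -> ~ in_int_feasible g x ->
    (exists s, Dc Ic l u x s /\
       forall i, 0 <= g i x -> forall xi, clarke_subdiff Ic (g i) x xi ->
         vdot xi s < 0) \/
    (exists d, Dz Ic l u x d /\ viol g (vadd x (ivec d)) < viol g x).

End MINLP.

(* At a feasible point [xbar] the penalty only sees the active constraints:
   in a continuous direction [s] the Clarke derivative of [P] is at most
   [f°(s) + eps^-1 * sum_(g_i(xbar) = 0) max(0, g_i°(s))], and Clarke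
   stationarity makes this sublinear function of [s] nonnegative on the cone
   [D^c(xbar)]. Lifting it to the sublinear function
   [(b_0, b, t) |-> f°(b_0) + sum_i w_i * max(0, g_i°(b_i) + t_i)] on a product
   space, Hahn-Banach with a cone constraint yields, uniformly in the direction,
   multipliers [0 <= lam_i <= w_i] (the [t]-block of the minorant) and Clarke
   subgradients of [f] and of the [g_i] (the other blocks). As the penalty
   vanishes on feasible points, the discrete part of Clarke stationarity is the
   discrete part of the KKT conditions. *)

From HB Require Import structures.
From mathcomp Require Import all_boot all_order all_algebra.
From mathcomp Require Import all_classical all_reals ereal.
From mathcomp Require Import ring lra.
Import Order.TTheory GRing.Theory Num.Theory.
Set Implicit Arguments. Unset Strict Implicit. Unset Printing Implicit Defensive.
Local Open Scope ring_scope.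
Local Open Scope classical_set_scope.

Section Sublinear.
Variables (R : realType) (T : finType).
Implicit Types (p q : (T -> R) -> R) (v w a b c : T -> R) (C : set (T -> R)).

Definition sublinear p :=
  (forall v w, p (v + w) <= p v + p w) /\
  (forall t v, 0 < t -> p (fun i => t * v i) = t * p v).

Definition convex_cone C :=
  [/\ C 0, forall a b, C a -> C b -> C (a + b)
     & forall t a, 0 < t -> C a -> C (fun i => t * a i)].

Lemma sublinear0 p : sublinear p -> p 0 = 0.
Proof.
move=> [_ hom]; have := hom 2 0 (ltr0Sn R 1).
have -> : (fun i : T => 2 * (0 : T -> R) i) = 0 by apply/funext => i; rewrite /= mulr0.
move=> h; lra.
Qed.

(* The infimal convolution [q v = inf_(a in C) p (v + a) - theta a] of [p]
   with [- theta] over the cone [C]; [theta <= p] on [C] makes it finite. *)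
Lemma sublinear_inf_cone p C (theta : (T -> R) -> R) :
  sublinear p -> convex_cone C ->
  (forall a b, C a -> C b -> theta (a + b) = theta a + theta b) ->
  (forall t a, 0 < t -> C a -> theta (fun i => t * a i) = t * theta a) ->
  (forall a, C a -> theta a <= p a) ->
  exists2 q, sublinear q & forall v a, C a -> q v <= p (v + a) - theta a.
Proof.
move=> sp [C0 CD CZ] thD thZ thp; have p0 := sublinear0 sp.
case: sp => pD pZ.
have th0 : theta 0 = 0 by have := thD _ _ C0 C0; rewrite addr0 => h; lra.
pose E v := (fun a => p (v + a) - theta a) @` C.
have Ene v : E v !=set0 by exists (p (v + 0) - theta 0), 0.
have Elb v : lbound (E v) (- p (- v)).
  move=> _ [a Ca <-]; suff : theta a <= p (v + a) + p (- v) by lra.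
  apply: le_trans (thp _ Ca) _; have := pD (v + a) (- v).
  by rewrite addrAC subrr add0r.
have Ehas v : has_lbound (E v) by exists (- p (- v)).
exists (fun v => inf (E v)); last by move=> v a Ca; apply: ge_inf => //; exists a.
split=> [v w|t v t0].
  rewrite -lerBlDr; apply: lb_le_inf => // _ [a Ca <-].
  rewrite lerBlDr [X in _ <= X]addrC -lerBlDr; apply: lb_le_inf => // _ [b Cb <-].
  rewrite lerBlDr; apply: le_trans (ge_inf (Ehas _) _) _.
    by exists (a + b); first exact: CD.
  by rewrite /= thD //; have := pD (v + a) (w + b); rewrite addrACA; lra.
apply/eqP; rewrite eq_le; apply/andP; split.
  rewrite -ler_pdivrMl //; apply: lb_le_inf => // _ [a Ca <-].
  rewrite ler_pdivrMl //; apply: le_trans (ge_inf (Ehas _) _) _.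
    by exists (fun i => t * a i); first exact: CZ.
  rewrite /= thZ // mulrBr -pZ //.
  by have -> // : (fun i => t * v i) + (fun i => t * a i) = (fun i => t * (v + a) i)
    by apply/funext => i /=; rewrite mulrDr.
apply: lb_le_inf => // _ [a Ca <-].
have Ca' : C (fun i => t^-1 * a i) by apply: CZ; rewrite ?invr_gt0.
rewrite -[a](_ : (fun i => t * (t^-1 * a i)) = a); last first.
  by apply/funext => i; rewrite mulrA mulfV ?mul1r // gt_eqF.
have -> : (fun i => t * v i) + (fun i => t * (t^-1 * a i)) =
    (fun i => t * (v + (fun i => t^-1 * a i)) i) by apply/funext => i /=; rewrite mulrDr.
rewrite pZ // thZ // -mulrBr ler_pM2l //.
by apply: ge_inf => //; exists (fun i => t^-1 * a i).
Qed.

Let e j : T -> R := fun i => (i == j)%:R.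

(* The step of the Hahn-Banach induction that fixes the value [p (e j)] on [e j]. *)
Lemma sublinear_inf_line p j : sublinear p ->
  exists2 q, sublinear q & forall v r, q v <= p (v + (fun i => r * e j i)) - r * p (e j).
Proof.
move=> sp; have p0 := sublinear0 sp; have [pD pZ] := sp.
pose line := [set a | exists r, a = fun i => r * e j i].
have [q sq hq] : exists2 q, sublinear q &
    forall v a, line a -> q v <= p (v + a) - a j * p (e j).
  apply: sublinear_inf_cone => //.
  - split; first by exists 0; apply/funext => i; rewrite mul0r.
      by move=> _ _ [r ->] [r' ->]; exists (r + r'); apply/funext => i /=; rewrite mulrDl.
    by move=> t _ _ [r ->]; exists (t * r); apply/funext => i; rewrite mulrA.
  - by move=> a b _ _; rewrite mulrDl.
  - by move=> t a _ _; rewrite mulrA.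
  move=> _ [r ->]; rewrite /e eqxx mulr1.
  have pe : 0 <= p (e j) + p (- e j) by rewrite -p0 -(subrr (e j)); apply: pD.
  case: (ltrgtP 0 r) => hr; first by rewrite pZ.
    have -> : (fun i => r * e j i) = (fun i => - r * (- e j) i).
      by apply/funext => i /=; rewrite mulrNN.
    by rewrite pZ ?oppr_gt0 //; nra.
  rewrite -hr mul0r; under eq_fun do rewrite mul0r.
  by rewrite -[X in _ <= p X]/(0 : T -> R) p0.
exists q => // v r; have := hq v _ (ex_intro _ r erefl).
by rewrite /= /e eqxx mulr1.
Qed.

Lemma sublinear_minorant_on p (s : seq T) : sublinear p ->
  exists c, forall v, (forall i, i \notin s -> v i = 0) -> \sum_i c i * v i <= p v.
Proof.
elim: s p => [|j s IH] p sp.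
  exists 0 => v v0; have -> : v = 0 by apply/funext => i; apply: v0.
  by rewrite (sublinear0 sp) big1 // => i _; rewrite mulr0.
have [q sq hq] := sublinear_inf_line j sp; have [c Hc] := IH q sq.
exists (fun i => if i == j then p (e j) else c i) => v vs.
pose v' := fun i => if i == j then 0 else v i.
have v's i : i \notin s -> v' i = 0.
  rewrite /v'; case: (eqVneq i j) => // ij ins; apply: vs.
  by rewrite in_cons negb_or ij.
have := hq v' (v j).
have -> : v' + (fun i => v j * e j i) = v.
  apply/funext => i; rewrite addrfctE /v' /e.
  by case: (eqVneq i j) => [->|_]; rewrite ?mulr1 ?mulr0 ?add0r ?addr0.
move=> hv; have hc := Hc _ v's.
have -> : \sum_i (if i == j then p (e j) else c i) * v i = p (e j) * v j + \sum_i c i * v' i.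
  rewrite (bigD1 j) //= eqxx [in RHS](bigD1 j) //= /v' eqxx mulr0 add0r.
  by congr (_ + _); apply: eq_bigr => i /negbTE ->.
lra.
Qed.

Lemma sublinear_minorant p : sublinear p ->
  exists c, forall v, \sum_i c i * v i <= p v.
Proof.
move=> sp; have [c Hc] := sublinear_minorant_on (enum T) sp.
by exists c => v; apply: Hc => i; rewrite mem_enum.
Qed.

Lemma sublinear_minorant_cone p C :
  sublinear p -> convex_cone C -> (forall a, C a -> 0 <= p a) ->
  exists c, (forall v, \sum_i c i * v i <= p v) /\
            (forall a, C a -> 0 <= \sum_i c i * a i).
Proof.
move=> sp Ccone pC; have [C0 _ _] := Ccone.
have [q sq hq] := sublinear_inf_cone sp Ccone
  (fun _ _ _ _ => esym (addr0 0)) (fun _ _ _ _ => esym (mulr0 _)) pC.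
have [c Hc] := sublinear_minorant sq.
exists c; split=> [v|a Ca].
  by apply: le_trans (Hc v) _; have := hq v 0 C0; rewrite addr0 subr0.
have := le_trans (Hc (- a)) (hq _ _ Ca); rewrite addNr (sublinear0 sp) subr0.
have -> : \sum_i c i * (- a) i = - \sum_i c i * a i.
  by rewrite -sumrN; apply: eq_bigr => i _; exact: mulrN.
by rewrite oppr_le0.
Qed.

End Sublinear.

Section PositivePart.
Variable R : realDomainType.
Implicit Types a b t : R.

Lemma max0_subadd a b : Num.max 0 (a + b) <= Num.max 0 a + Num.max 0 b.
Proof.
by rewrite !maxEle; case: (lerP 0 (a + b)); case: (lerP 0 a); case: (lerP 0 b) => *; lra.
Qed.

Lemma max0_subr a b : Num.max 0 a - Num.max 0 b <= Num.max 0 (a - b).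
Proof.
by rewrite !maxEle; case: (lerP 0 (a - b)); case: (lerP 0 a); case: (lerP 0 b) => *; lra.
Qed.

Lemma max0_dist a b : `|Num.max 0 a - Num.max 0 b| <= `|a - b|.
Proof.
rewrite !maxEle; case: (lerP 0 a) => ha; case: (lerP 0 b) => hb.
- by [].
- by rewrite subr0 !ger0_norm //; lra.
- by rewrite sub0r normrN [`|a - b|]ler0_norm ?ger0_norm //; lra.
- by rewrite subrr normr0.
Qed.

Lemma max0_pM t a : 0 <= t -> Num.max 0 (t * a) = t * Num.max 0 a.
Proof. by move=> t0; rewrite maxr_pMr // mulr0. Qed.

End PositivePart.

Section VectorNorm.
Variables (R : realType) (n : nat).
Local Notation vec := ('I_n -> R).

Lemma vdotC (a b : vec) : vdot a b = vdot b a.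
Proof. by apply: eq_bigr => i _; rewrite mulrC. Qed.

Lemma vnorm_ge0 (v : vec) : 0 <= vnorm v.
Proof. exact: sqrtr_ge0. Qed.

Lemma vnorm_scale t (s : vec) : 0 <= t -> vnorm (vscale t s) = t * vnorm s.
Proof.
move=> t0; rewrite /vnorm /vscale; under eq_bigr do rewrite exprMn.
by rewrite -mulr_sumr sqrtrM ?sqr_ge0 // sqrtr_sqr ger0_norm.
Qed.

Lemma vnorm_subrr (v : vec) : vnorm (vsub v v) = 0.
Proof.
by rewrite /vnorm big1 ?sqrtr0 // => i _; rewrite /vsub subrr expr0n.
Qed.

(* The constant 2 instead of 1 spares us the Cauchy-Schwarz inequality. *)
Lemma vnorm_addle (a b : vec) : vnorm (vadd a b) <= 2 * (vnorm a + vnorm b).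
Proof.
have sq_vnorm (v : vec) : vnorm v ^+ 2 = \sum_i v i ^+ 2.
  by rewrite sqr_sqrtr // sumr_ge0 // => i _; rewrite sqr_ge0.
have na := vnorm_ge0 a; have nb := vnorm_ge0 b.
rewrite -[X in _ <= X]ger0_norm ?mulr_ge0 ?addr_ge0 // -sqrtr_sqr.
apply: ler_wsqrtr; have : \sum_i vadd a b i ^+ 2 <= 2 * \sum_i a i ^+ 2 + 2 * \sum_i b i ^+ 2.
  rewrite !mulr_sumr -big_split /=; apply: ler_sum => i _.
  by rewrite /vadd; have := sqr_ge0 (a i - b i); nra.
by rewrite -!sq_vnorm; nra.
Qed.

End VectorNorm.

Section Multipliers.
Variables (R : realType) (I J : finType).
Local Notation T := (I + (J * I + J))%type.

Definition pack (b0 : I -> R) (b : J -> I -> R) (t : J -> R) : T -> R :=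
  fun a => match a with
           | inl i => b0 i | inr (inl (j, i)) => b j i | inr (inr j) => t j end.

Lemma sum_pack (c : T -> R) b0 b t : \sum_a c a * pack b0 b t a =
  \sum_i c (inl i) * b0 i + \sum_j \sum_i c (inr (inl (j, i))) * b j i +
  \sum_j c (inr (inr j)) * t j.
Proof.
rewrite big_sumType /= big_sumType /= addrA; congr (_ + _ + _).
by rewrite pair_bigA; apply: eq_bigr => -[j i].
Qed.

Lemma linear_le0 (a : I -> R) : (forall v, \sum_i a i * v i <= 0) -> a = 0.
Proof.
move=> ha; have : \sum_i a i ^+ 2 == 0.
  by rewrite eq_le ha sumr_ge0 // => i _; rewrite sqr_ge0.
rewrite psumr_eq0 => [/allP a0|i _]; last exact: sqr_ge0.
by apply/funext => i; apply/eqP; rewrite -sqrf_eq0; apply: a0; rewrite mem_index_enum.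
Qed.

Lemma sublinear_scaled_minorant (psi : (I -> R) -> R) lam (eta : I -> R) :
  sublinear psi -> 0 <= lam -> (forall v, \sum_i eta i * v i <= lam * psi v) ->
  exists2 xi : I -> R, (forall v, \sum_i xi i * v i <= psi v) &
                       (fun i => lam * xi i) = eta.
Proof.
move=> spsi; rewrite le_eqVlt => /predU1P[<-|lam0] eta_le.
  have [xi xi_le] := sublinear_minorant spsi; exists xi => //.
  have -> : eta = 0 by apply: linear_le0 => v; have := eta_le v; rewrite mul0r.
  by apply/funext => i; rewrite mul0r.
exists (fun i => eta i / lam); last by apply/funext => i; rewrite mulrC divfK ?gt_eqF.
move=> v; under eq_bigr do rewrite mulrAC; rewrite -mulr_suml ler_pdivrMr // mulrC.
exact: eta_le.
Qed.

Variables (phi : (I -> R) -> R) (psi : J -> (I -> R) -> R) (w : J -> R).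
Hypotheses (phi_sub : sublinear phi) (psi_sub : forall j, sublinear (psi j))
  (w_ge0 : forall j, 0 <= w j).

(* A linear minorant of this function that is nonnegative on the lifted cone
   yields the multipliers: its three blocks are a subgradient of [phi], the
   products [lam j * xi j] and the [lam j]. *)
Definition lifted_penalty (z : T -> R) :=
  phi (fun i => z (inl i)) +
  \sum_j w j * Num.max 0 (psi j (fun i => z (inr (inl (j, i)))) + z (inr (inr j))).

Lemma lifted_penalty_pack b0 b t :
  lifted_penalty (pack b0 b t) = phi b0 + \sum_j w j * Num.max 0 (psi j (b j) + t j).
Proof. by []. Qed.

Lemma sublinear_lifted_penalty : sublinear lifted_penalty.
Proof.
have [phiD phiZ] := phi_sub; split=> [v v'|t v t0].
  rewrite /lifted_penalty addrACA; apply: lerD; first exact: phiD.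
  rewrite -big_split /=; apply: ler_sum => j _; rewrite -mulrDr ler_wpM2l //.
  apply: le_trans (max0_subadd _ _); apply: le_max2 => //.
  by rewrite addrACA lerD2r; apply: (proj1 (psi_sub j)).
rewrite /lifted_penalty mulrDr phiZ // mulr_sumr; congr (_ + _); apply: eq_bigr => j _.
by rewrite (proj2 (psi_sub j)) // -mulrDr max0_pM ?ltW // mulrCA.
Qed.

Section Minorant.
Variable c : T -> R.
Hypothesis c_le : forall z, \sum_a c a * z a <= lifted_penalty z.

Let sum_delta j0 (G : J -> R) : (forall j, j != j0 -> G j = 0) -> \sum_j G j = G j0.
Proof. by move=> G0; rewrite (bigD1 j0) //= big1 ?addr0 // => j /G0. Qed.

Let sumr_mul0 (K : finType) (F : K -> R) : \sum_k F k * 0 = 0.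
Proof. by rewrite big1 // => k _; rewrite mulr0. Qed.

Let psi0 j : psi j (fun _ => 0) = 0 := sublinear0 (psi_sub j).

Let max0_psi0 j : w j * Num.max 0 (psi j (fun _ => 0) + 0) = 0.
Proof. by rewrite psi0 addr0 maxxx mulr0. Qed.

Lemma minorant_head v : \sum_i c (inl i) * v i <= phi v.
Proof.
have := c_le (pack v (fun _ _ => 0) (fun _ => 0)); rewrite sum_pack lifted_penalty_pack /=.
rewrite sumr_mul0 [X in _ + X + _]big1 => [|j _]; last exact: sumr_mul0.
by rewrite [X in _ <= _ + X]big1 ?addr0 // => j _; exact: max0_psi0.
Qed.

Lemma minorant_tail j tau : c (inr (inr j)) * tau <= w j * Num.max 0 tau.
Proof.
have := c_le (pack (fun _ => 0) (fun _ _ => 0) (fun j' => if j' == j then tau else 0)).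
rewrite sum_pack lifted_penalty_pack /= sumr_mul0 (sublinear0 phi_sub) !add0r.
rewrite big1 ?add0r => [|j' _]; last exact: sumr_mul0.
rewrite !(@sum_delta j) ?eqxx ?psi0 ?add0r // => j' /negbTE ->.
  by rewrite max0_psi0.
by rewrite mulr0.
Qed.

Lemma minorant_tail_bound j : 0 <= c (inr (inr j)) <= w j.
Proof.
have := minorant_tail j 1; have := minorant_tail j (-1).
by rewrite (max_r ler01) (max_l (lerN10 R)) mulr0 !mulr1 mulrN1 oppr_le0 => -> ->.
Qed.

Lemma minorant_block j v :
  \sum_i c (inr (inl (j, i))) * v i <= c (inr (inr j)) * psi j v.
Proof.
have := c_le (pack (fun _ => 0) (fun j' => if j' == j then v else (fun _ => 0))
                    (fun j' => if j' == j then - psi j v else 0)).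
rewrite sum_pack lifted_penalty_pack /= sumr_mul0 (sublinear0 phi_sub) !add0r.
rewrite (@sum_delta j) => [|j' /negbTE ->]; last exact: sumr_mul0.
rewrite (@sum_delta j) => [|j' /negbTE ->]; last by rewrite mulr0.
rewrite [X in _ <= X]big1 => [|j' _]; last first.
  case: (eqVneq j' j) => [->|_]; last exact: max0_psi0.
  by rewrite subrr maxxx mulr0.
by rewrite eqxx mulrN subr_le0.
Qed.
End Minorant.

Definition diag (k : I -> R) := pack k (fun _ => k) (fun _ => 0).

Lemma convex_cone_diag (C : set (I -> R)) :
  convex_cone C -> convex_cone [set z | exists2 k, C k & z = diag k].
Proof.
case=> C0 CD CZ; split.
- by exists 0 => //; apply/funext => -[i|[[j i]|j]].
- move=> _ _ [k1 C1 ->] [k2 C2 ->]; exists (k1 + k2); first exact: CD.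
  by apply/funext => -[i|[[j i]|j]] //; rewrite addrfctE /= addr0.
- move=> t _ t0 [k Ck ->]; exists (fun i => t * k i); first exact: CZ.
  by apply/funext => -[i|[[j i]|j]] //=; rewrite mulr0.
Qed.

Lemma sublinear_multipliers (C : set (I -> R)) : convex_cone C ->
  (forall k, C k -> 0 <= phi k + \sum_j w j * Num.max 0 (psi j k)) ->
  exists (lam : J -> R) (xi0 : I -> R) (xi : J -> I -> R),
  [/\ forall j, 0 <= lam j <= w j,
      forall v, \sum_i xi0 i * v i <= phi v,
      forall j v, \sum_i xi j i * v i <= psi j v &
      forall k, C k -> 0 <= \sum_i (xi0 i + \sum_j lam j * xi j i) * k i].
Proof.
move=> Ccone Cpos.
have diag_pos z : [set z | exists2 k, C k & z = diag k] z -> 0 <= lifted_penalty z.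
  move=> [k Ck ->]; rewrite lifted_penalty_pack.
  by under eq_bigr do rewrite addr0; exact: Cpos.
have [c [c_le c_ge]] :=
  sublinear_minorant_cone sublinear_lifted_penalty (convex_cone_diag Ccone) diag_pos.
pose lam j := c (inr (inr j)); pose eta j i := c (inr (inl (j, i))).
have lam_bnd j : 0 <= lam j <= w j := minorant_tail_bound c_le j.
have /choice[xi /all_and2[xi_le lam_xi]] : forall j, exists xi : I -> R,
    (forall v, \sum_i xi i * v i <= psi j v) /\ (fun i => lam j * xi i) = eta j.
  move=> j; have [lam0 _] := andP (lam_bnd j).
  have [xi] := sublinear_scaled_minorant (psi_sub j) lam0 (minorant_block c_le j).
  by exists xi.
exists lam, (fun i => c (inl i)), xi; split=> //; first exact: minorant_head.
move=> k Ck; have -> : \sum_i (c (inl i) + \sum_j lam j * xi j i) * k i =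
    \sum_i c (inl i) * k i + \sum_j \sum_i eta j i * k i.
  under eq_bigr do rewrite mulrDl mulr_suml; rewrite big_split /= exchange_big /=.
  congr (_ + _); apply: eq_bigr => j _; apply: eq_bigr => i _.
  by rewrite -(lam_xi j).
have := c_ge _ (ex_intro2 _ _ k Ck erefl); rewrite sum_pack.
by rewrite [X in _ + X]big1 ?addr0 // => j _; exact: mulr0.
Qed.

End Multipliers.

Section ClarkeDerivative.
Variables (R : realType) (n : nat) (Ic : {set 'I_n}) (x : 'I_n -> R).
Local Notation vec := ('I_n -> R).
Implicit Types (h f : vec -> R) (s v : vec) (yt : vec * R).

Definition cdir s := forall i, i \notin Ic -> s i = 0.

Definition c_lipschitz h := exists L, lipschitz_c Ic L h.

Lemma c_lipschitzD h1 h2 : c_lipschitz h1 -> c_lipschitz h2 ->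
  c_lipschitz (fun z => h1 z + h2 z).
Proof.
move=> [L1 hL1] [L2 hL2]; exists (L1 + L2) => a b ab.
rewrite opprD addrACA mulrDl; apply: le_trans (ler_normD _ _) _.
by apply: lerD; [exact: hL1 | exact: hL2].
Qed.

Lemma c_lipschitzMl c h : c_lipschitz h -> c_lipschitz (fun z => c * h z).
Proof.
move=> [L hL]; exists (`|c| * L) => a b ab.
by rewrite -mulrBr normrM -mulrA ler_wpM2l //; exact: hL.
Qed.

Lemma c_lipschitz_sum (I : finType) (h : I -> vec -> R) :
  (forall i, c_lipschitz (h i)) -> c_lipschitz (fun z => \sum_i h i z).
Proof.
move=> /choice[L hL]; exists (\sum_i L i) => a b ab.
rewrite -sumrB mulr_suml; apply: le_trans (ler_norm_sum _ _ _) _.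
by apply: ler_sum => i _; exact: hL.
Qed.

Lemma c_lipschitz_max0 h : c_lipschitz h -> c_lipschitz (fun z => Num.max 0 (h z)).
Proof.
by move=> [L hL]; exists L => a b ab; apply: le_trans (max0_dist _ _) (hL _ _ ab).
Qed.

Lemma c_lipschitz_penalty m f (g : 'I_m -> vec -> R) eps :
  c_lipschitz f -> (forall i, c_lipschitz (g i)) -> c_lipschitz (penalty f g eps).
Proof.
move=> hf hg; apply: c_lipschitzD hf (c_lipschitzMl _ _).
exact: c_lipschitz_sum (fun i => c_lipschitz_max0 (hg i)).
Qed.

Definition clarke_ball (del : R) : set (vec * R) :=
  [set yt | vnorm (vsub yt.1 x) < del /\
            (forall i, i \notin Ic -> yt.1 i = x i) /\ 0 < yt.2 < del].

(* [(y, t) -> (x, 0+)] with [y] equal to [x] on the integer variables: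
   [clarke_dd] is the limsup of [diffq] along this filter. *)
Definition clarke_filter := filter_from [set del : R | 0 < del] clarke_ball.

Definition diffq h s yt := (h (vadd yt.1 (vscale yt.2 s)) - h yt.1) / yt.2.

(* [fine] sends infinite values to [0]; [clarke_dd] is finite for Lipschitz [h]
   (lemma [clarke_dd_fin]). *)
Definition clarke_ddr h s := fine (clarke_dd Ic h x s).

Lemma clarke_ball_center del : 0 < del -> clarke_ball del (x, del / 2).
Proof.
move=> del0; split; first by rewrite vnorm_subrr.
by split=> //=; rewrite divr_gt0 //= ltr_pdivrMr // ltr_pMr // ltr1n.
Qed.

Instance clarke_filter_proper : ProperFilter clarke_filter.
Proof.
apply: filter_from_proper; last by move=> del del0; exists (x, del / 2);
  exact: clarke_ball_center.
apply: filter_from_filter; first by exists 1; exact: ltr01.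
move=> d1 d2 d10 d20; exists (Num.min d1 d2); first by rewrite /= lt_min d10.
move=> [y t] [yd [yz /andP[t0 td]]]; move: yd td.
rewrite !lt_min => /andP[y1 y2] /andP[t1 t2].
by split; split=> //; rewrite t0.
Qed.

Lemma near_clarke_pos : \forall yt \near clarke_filter, 0 < yt.2.
Proof. by exists 1; [exact: ltr01 | move=> yt [_ [_ /andP[]]]]. Qed.

Lemma near_clarke_shift s (P : set (vec * R)) : cdir s ->
  (\forall yt \near clarke_filter, P yt) ->
  \forall yt \near clarke_filter, P (vadd yt.1 (vscale yt.2 s), yt.2).
Proof.
move=> zs [del del0 sub]; have ns := vnorm_ge0 s.
pose M := 2 * (1 + vnorm s); have M0 : 0 < M by rewrite mulr_gt0 // ltr_pwDl.
exists (Num.min del (del / M)); first by rewrite /= lt_min del0 divr_gt0.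
move=> [y t] [yd [yz /andP[t0 td]]]; move: yd td; rewrite !lt_min.
move=> /andP[_ yd] /andP[td td']; apply: sub; split => /=.
  have -> : vsub (vadd y (vscale t s)) x = vadd (vsub y x) (vscale t s).
    by apply/funext => i; rewrite /vsub /vadd addrAC.
  apply: le_lt_trans (vnorm_addle _ _) _; rewrite (vnorm_scale _ (ltW t0)).
  move: yd td'; rewrite /= !ltr_pdivlMr // /M => yd td'.
  have := vnorm_ge0 (vsub y x); nra.
split; last by rewrite t0 (lt_le_trans td) // ge_min lexx.
by move=> i zi; rewrite /vadd /vscale zs // mulr0 addr0; exact: yz.
Qed.

Lemma near_clarke_scale t (P : set (vec * R)) : 0 < t ->
  (\forall yt \near clarke_filter, P yt) ->
  \forall yt \near clarke_filter, P (yt.1, yt.2 * t).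
Proof.
move=> t0 [del del0 sub]; have t1 : 0 < 1 + t by rewrite addr_gt0.
exists (del / (1 + t)); first by rewrite /= divr_gt0.
move=> [y tau] [yd [yz /andP[tau0 taud]]]; apply: sub.
move: yd taud; rewrite /= !ltr_pdivlMr // => yd taud.
split; first by have := vnorm_ge0 (vsub y x); rewrite /=; nra.
by split=> //=; rewrite /= in tau0; rewrite mulr_gt0 //=; nra.
Qed.

Lemma near_clarke_lt h b : c_lipschitz h -> h x < b ->
  \forall yt \near clarke_filter, h yt.1 < b.
Proof.
move=> [L hL] hb; pose del := (b - h x) / (`|L| + 1).
have L1 : 0 < `|L| + 1 by rewrite ltr_pwDr.
exists del; first by rewrite /= divr_gt0 // subr_gt0.
move=> [y t] [yd [yz _]] /=; have := hL y x yz; rewrite ler_norml => /andP[_].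
move: yd; rewrite ltr_pdivlMr // => yd; have nv := vnorm_ge0 (vsub y x).
have LL : L <= `|L| by exact: ler_norm.
nra.
Qed.

Lemma diffq_bound L h s yt : lipschitz_c Ic L h -> cdir s -> 0 < yt.2 ->
  `|diffq h s yt| <= L * vnorm s.
Proof.
case: yt => y t hL zs /= t0; have ti : 0 < t^-1 by rewrite invr_gt0.
rewrite /diffq /= normrM (gtr0_norm ti) ler_pdivrMr //; apply: le_trans (hL _ _ _) _.
  by move=> i /zs si; rewrite /vadd /vscale si mulr0 addr0.
have -> : vsub (vadd y (vscale t s)) y = vscale t s.
  by apply/funext => i; rewrite /vsub /vadd addrC addKr.
by rewrite (vnorm_scale _ (ltW t0)) mulrA mulrAC.
Qed.

Lemma clarke_ddE h s : clarke_dd Ic h x s = ereal_inf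
  [set ereal_sup [set (diffq h s yt)%:E | yt in clarke_ball del]
     | del in [set del : R | 0 < del]].
Proof. by []. Qed.

Lemma clarke_dd_le_sup h s del : 0 < del -> (clarke_dd Ic h x s <=
  ereal_sup [set (diffq h s yt)%:E | yt in clarke_ball del])%E.
Proof. by move=> del0; apply: ereal_inf_lbound; exists del. Qed.

Lemma clarke_dd_fin h s : c_lipschitz h -> cdir s ->
  clarke_dd Ic h x s = (clarke_ddr h s)%:E.
Proof.
move=> [L hL] zs; have qB := diffq_bound hL zs.
have lo : ((- (L * vnorm s))%:E <= clarke_dd Ic h x s)%E.
  rewrite clarke_ddE; apply: le_ereal_inf_tmp => _ [del del0 <-].
  have Bc := clarke_ball_center del0.
  apply: (@le_trans _ _ (diffq h s (x, del / 2))%:E).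
    have [_ [_ /andP[t0 _]]] := Bc.
    by rewrite lee_fin; have := qB _ t0; rewrite ler_norml => /andP[].
  by apply: ereal_sup_ubound; exists (x, del / 2).
have up : (clarke_dd Ic h x s <= (L * vnorm s)%:E)%E.
  apply: le_trans (clarke_dd_le_sup h s ltr01) _.
  apply: ge_ereal_sup => _ [yt [_ [_ /andP[t0 _]]] <-].
  by rewrite lee_fin; exact: le_trans (ler_norm _) (qB _ t0).
by rewrite /clarke_ddr; move: lo up; case: (clarke_dd Ic h x s).
Qed.

Lemma clarke_ddr_leP h s b : c_lipschitz h -> cdir s ->
  clarke_ddr h s <= b <->
  forall e, 0 < e -> \forall yt \near clarke_filter, diffq h s yt <= b + e.
Proof.
move=> hL zs; split=> [hb e e0|hb].
  have : (clarke_dd Ic h x s < (b + e)%:E)%E.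
    by rewrite clarke_dd_fin // lte_fin; apply: le_lt_trans hb _; rewrite ltrDl.
  rewrite clarke_ddE => /ereal_inf_lt[_ [del del0 <-]] hlt.
  exists del => // yt Byt; rewrite -lee_fin; apply: le_trans (ltW hlt).
  by apply: ereal_sup_ubound; exists yt.
apply/ler_addgt0Pr => e e0; have [del del0 sub] := hb e e0.
rewrite -lee_fin -clarke_dd_fin //; apply: le_trans (clarke_dd_le_sup h s del0) _.
by apply: ge_ereal_sup => _ [yt Byt <-]; rewrite lee_fin; exact: sub.
Qed.

Lemma near_clarke_ddr h s e : c_lipschitz h -> cdir s -> 0 < e ->
  \forall yt \near clarke_filter, diffq h s yt <= clarke_ddr h s + e.
Proof. by move=> hL zs; apply: (clarke_ddr_leP _ hL zs).1. Qed.

Lemma cdir_scale t s : cdir s -> cdir (vscale t s).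
Proof. by move=> zs i /zs si; rewrite /vscale si mulr0. Qed.

Lemma cdir_add s1 s2 : cdir s1 -> cdir s2 -> cdir (vadd s1 s2).
Proof. by move=> z1 z2 i zi; rewrite /vadd z1 ?z2 ?addr0. Qed.

Lemma clarke_ddr_scale_le h s t : c_lipschitz h -> cdir s -> 0 < t ->
  clarke_ddr h (vscale t s) <= t * clarke_ddr h s.
Proof.
move=> hL zs t0; apply/(clarke_ddr_leP _ hL (cdir_scale t zs)) => e e0.
have et0 : 0 < e / t by rewrite divr_gt0.
have := near_clarke_scale t0 (near_clarke_ddr hL zs et0).
apply: filterS2 near_clarke_pos => -[y tau] /= tau0 hq.
have -> : diffq h (vscale t s) (y, tau) = t * diffq h s (y, tau * t).
  rewrite /diffq /=; have -> : vscale tau (vscale t s) = vscale (tau * t) s.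
    by apply/funext => i; rewrite /vscale mulrA.
  by field; rewrite !gt_eqF.
apply: le_trans (ler_wpM2l (ltW t0) hq) _.
by rewrite mulrDr mulrCA mulfV ?gt_eqF // mulr1.
Qed.

Lemma clarke_ddrZ h s t : c_lipschitz h -> cdir s -> 0 < t ->
  clarke_ddr h (vscale t s) = t * clarke_ddr h s.
Proof.
move=> hL zs t0; apply/eqP; rewrite eq_le clarke_ddr_scale_le //=.
have ti : 0 < t^-1 by rewrite invr_gt0.
have := clarke_ddr_scale_le hL (cdir_scale t zs) ti.
have -> : vscale t^-1 (vscale t s) = s.
  by apply/funext => i; rewrite /vscale mulrA mulVf ?gt_eqF // mul1r.
by rewrite ler_pdivlMl.
Qed.

Lemma clarke_ddr_subadd h s1 s2 : c_lipschitz h -> cdir s1 -> cdir s2 ->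
  clarke_ddr h (vadd s1 s2) <= clarke_ddr h s1 + clarke_ddr h s2.
Proof.
move=> hL z1 z2; apply/(clarke_ddr_leP _ hL (cdir_add z1 z2)) => e e0.
have e20 : 0 < e / 2 by rewrite divr_gt0.
have q2 := near_clarke_shift z1 (near_clarke_ddr hL z2 e20).
apply: filterS3 near_clarke_pos (near_clarke_ddr hL z1 e20) q2 => -[y t] /= t0 q1 {}q2.
have -> : diffq h (vadd s1 s2) (y, t) =
    diffq h s2 (vadd y (vscale t s1), t) + diffq h s1 (y, t).
  rewrite /diffq /= -mulrDl addrA subrK.
  have -> // : vadd y (vscale t (vadd s1 s2)) = vadd (vadd y (vscale t s1)) (vscale t s2).
  by apply/funext => i; rewrite /vadd /vscale mulrDr addrA.
lra.
Qed.

Lemma clarke_ddrD h1 h2 s : c_lipschitz h1 -> c_lipschitz h2 -> cdir s ->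
  clarke_ddr (fun z => h1 z + h2 z) s <= clarke_ddr h1 s + clarke_ddr h2 s.
Proof.
move=> hL1 hL2 zs; apply/(clarke_ddr_leP _ (c_lipschitzD hL1 hL2) zs) => e e0.
have e20 : 0 < e / 2 by rewrite divr_gt0.
apply: filterS2 (near_clarke_ddr hL1 zs e20) (near_clarke_ddr hL2 zs e20) => yt q1 q2.
have -> : diffq (fun z => h1 z + h2 z) s yt = diffq h1 s yt + diffq h2 s yt.
  by rewrite /diffq opprD addrACA mulrDl.
lra.
Qed.

Lemma clarke_ddrMl c h s : c_lipschitz h -> cdir s -> 0 <= c ->
  clarke_ddr (fun z => c * h z) s <= c * clarke_ddr h s.
Proof.
move=> hL zs c0; apply/(clarke_ddr_leP _ (c_lipschitzMl c hL) zs) => e e0.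
have c1 : 0 < c + 1 by rewrite ltr_pwDr.
have ec0 : 0 < e / (c + 1) by rewrite divr_gt0.
apply: filterS (near_clarke_ddr hL zs ec0) => yt q.
rewrite /diffq -mulrBr -mulrA -/(diffq h s yt).
apply: le_trans (ler_wpM2l c0 q) _; rewrite mulrDr lerD2l.
by rewrite mulrCA ger_pMr // ler_pdivrMr // mul1r lerDl.
Qed.

Lemma clarke_ddr_sum (I : finType) (h : I -> vec -> R) s :
  (forall i, c_lipschitz (h i)) -> cdir s ->
  clarke_ddr (fun z => \sum_i h i z) s <= \sum_i clarke_ddr (h i) s.
Proof.
move=> hL zs; apply/(clarke_ddr_leP _ (c_lipschitz_sum hL) zs) => e e0.
have k1 : 0 < #|I|%:R + 1 :> R by rewrite ltr_pwDr.
have e'0 : 0 < e / (#|I|%:R + 1) by rewrite divr_gt0.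
have := filter_forall (@filter_filter _ _ clarke_filter_proper)
  (fun i => near_clarke_ddr (hL i) zs e'0).
apply: filterS => yt q.
have -> : diffq (fun z => \sum_i h i z) s yt = \sum_i diffq (h i) s yt.
  by rewrite /diffq -sumrB mulr_suml.
apply: le_trans (ler_sum _ (fun i _ => q i)) _.
rewrite big_split /= sumr_const lerD2l -(mulr_natr (e / _)) mulrAC ler_pdivrMr //.
by rewrite ler_pM2l // lerDl.
Qed.

Lemma clarke_ddr_max0 h s : c_lipschitz h -> cdir s ->
  clarke_ddr (fun z => Num.max 0 (h z)) s <= Num.max 0 (clarke_ddr h s).
Proof.
move=> hL zs; apply/(clarke_ddr_leP _ (c_lipschitz_max0 hL) zs) => e e0.
apply: filterS2 near_clarke_pos (near_clarke_ddr hL zs e0) => -[y t] /= t0 q.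
have ti : 0 <= t^-1 by rewrite invr_ge0 ltW.
apply: le_trans (ler_wpM2r ti (max0_subr _ _)) _.
rewrite mulrC -max0_pM // mulrC -/(diffq h s (y, t)).
apply: le_trans (le_max2 (lexx 0) q) _.
by apply: le_trans (max0_subadd _ _) _; rewrite (max_r (ltW e0)).
Qed.

Lemma clarke_ddr_max0_inactive h s : c_lipschitz h -> cdir s -> h x < 0 ->
  clarke_ddr (fun z => Num.max 0 (h z)) s <= 0.
Proof.
move=> hL zs hx; apply/(clarke_ddr_leP _ (c_lipschitz_max0 hL) zs) => e e0.
have hneg := near_clarke_lt hL hx.
apply: filterS2 hneg (near_clarke_shift zs hneg) => -[y t] /= h1 h2.
by rewrite /diffq /= !max_l ?(ltW h1) ?(ltW h2) // subrr mul0r add0r; exact: ltW.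
Qed.

Definition penalty_weight m (g : 'I_m -> vec -> R) eps i : R :=
  if g i x < 0 then 0 else eps^-1.

Lemma penalty_weight_ge0 m (g : 'I_m -> vec -> R) eps i :
  0 < eps -> 0 <= penalty_weight g eps i.
Proof. by move=> eps0; rewrite /penalty_weight; case: ifP; rewrite // invr_ge0 ltW. Qed.

Lemma penalty_weight_compl m (g : 'I_m -> vec -> R) eps lam i : feasible g x ->
  0 <= lam <= penalty_weight g eps i -> lam * g i x = 0.
Proof.
rewrite /penalty_weight => feas; case: ltrP => [_ lam0|gi _].
  by rewrite (_ : lam = 0) ?mul0r //; apply/eqP; rewrite eq_le andbC.
by rewrite (_ : g i x = 0) ?mulr0 //; apply/eqP; rewrite eq_le feas.
Qed.

Lemma clarke_ddr_penalty m f (g : 'I_m -> vec -> R) eps s :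
  c_lipschitz f -> (forall i, c_lipschitz (g i)) -> 0 < eps -> cdir s ->
  clarke_ddr (penalty f g eps) s <=
  clarke_ddr f s + \sum_i penalty_weight g eps i * Num.max 0 (clarke_ddr (g i) s).
Proof.
move=> hf hg eps0 zs; have ie0 : 0 <= eps^-1 by rewrite invr_ge0 ltW.
have hmax i := c_lipschitz_max0 (hg i).
have hviol : c_lipschitz (viol g) := c_lipschitz_sum hmax.
apply: le_trans (clarke_ddrD hf (c_lipschitzMl eps^-1 hviol) zs) _; rewrite lerD2l.
apply: le_trans (clarke_ddrMl hviol zs ie0) _.
apply: le_trans (ler_wpM2l ie0 (clarke_ddr_sum hmax zs)) _.
rewrite mulr_sumr; apply: ler_sum => i _; rewrite /penalty_weight.
case: ifPn => [gneg|_]; last by rewrite ler_wpM2l // clarke_ddr_max0.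
by rewrite mul0r mulr_ge0_le0 // clarke_ddr_max0_inactive.
Qed.

Definition cproj v : vec := fun i => if i \in Ic then v i else 0.

Lemma cdir_cproj v : cdir (cproj v).
Proof. by move=> i /negbTE zi; rewrite /cproj zi. Qed.

Lemma cproj_id v : cdir v -> cproj v = v.
Proof. by move=> zv; apply/funext => i; rewrite /cproj; case: ifPn => // /zv ->. Qed.

Lemma vdot_cproj s v : cdir s -> vdot (cproj v) s = \sum_i v i * s i.
Proof.
move=> zs; apply: eq_bigr => i _; rewrite /cproj.
by case: ifPn => // /zs ->; rewrite !mulr0.
Qed.

Lemma sublinear_clarke_ddr h : c_lipschitz h -> sublinear (fun v => clarke_ddr h (cproj v)).
Proof.
move=> hL; split=> [v w|t v t0].
  have -> : cproj (v + w) = vadd (cproj v) (cproj w).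
    by apply/funext => i; rewrite /cproj /vadd; case: ifP; rewrite ?addr0.
  exact: clarke_ddr_subadd hL (cdir_cproj v) (cdir_cproj w).
have -> : cproj (fun i => t * v i) = vscale t (cproj v).
  by apply/funext => i; rewrite /cproj /vscale; case: ifP; rewrite ?mulr0.
exact: clarke_ddrZ hL (cdir_cproj v) t0.
Qed.

Lemma clarke_subdiff_cproj h xi : c_lipschitz h ->
  (forall v, \sum_i xi i * v i <= clarke_ddr h (cproj v)) ->
  clarke_subdiff Ic h x (cproj xi).
Proof.
move=> hL xi_le; split=> [|s zs]; first exact: cdir_cproj.
by rewrite clarke_dd_fin // lee_fin vdotC vdot_cproj // -{2}(cproj_id zs).
Qed.

Lemma convex_cone_Dc l u : convex_cone (Dc Ic l u x).
Proof.
split.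
- by split=> //; split=> i _ _.
- move=> a b [za [la ua]] [zb [lb ub]]; split; first exact: cdir_add.
  split=> i iI xi; rewrite addrfctE /=.
    exact: addr_ge0 (la i iI xi) (lb i iI xi).
  by have := ua i iI xi; have := ub i iI xi; lra.
- move=> t a t0 [za [la ua]]; split; first exact: cdir_scale.
  split=> i iI xi /=; first exact: mulr_ge0 (ltW t0) (la i iI xi).
  exact: mulr_ge0_le0 (ltW t0) (ua i iI xi).
Qed.

Lemma penalty_stationary_multipliers m l u f (g : 'I_m -> vec -> R) eps :
  c_lipschitz f -> (forall i, c_lipschitz (g i)) -> 0 < eps -> feasible g x ->
  (forall s, Dc Ic l u x s -> (0%:E <= clarke_dd Ic (penalty f g eps) x s)%E) ->
  exists lam : 'I_m -> R,
    (forall i, 0 <= lam i) /\ \sum_i lam i * g i x = 0 /\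
    (forall s, Dc Ic l u x s ->
       exists (xi0 : vec) (xis : 'I_m -> vec),
         clarke_subdiff Ic f x xi0 /\
         (forall i, clarke_subdiff Ic (g i) x (xis i)) /\
         0 <= vdot (fun j => xi0 j + \sum_i lam i * xis i j) s).
Proof.
move=> hf hg eps0 feas stat.
have penalty_ge0 k : Dc Ic l u x k -> 0 <= clarke_ddr f (cproj k) +
    \sum_i penalty_weight g eps i * Num.max 0 (clarke_ddr (g i) (cproj k)).
  move=> Dk; have zk : cdir k by case: Dk.
  have := stat k Dk; rewrite clarke_dd_fin ?lee_fin ?cproj_id //.
    by move/le_trans; apply; exact: clarke_ddr_penalty.
  exact: c_lipschitz_penalty.
have [lam [xi0 [xi [lam_bnd xi0_le xi_le lam_kkt]]]] :=
  sublinear_multipliers (sublinear_clarke_ddr hf) (fun i => sublinear_clarke_ddr (hg i))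
    (fun i => penalty_weight_ge0 g i eps0) (convex_cone_Dc l u) penalty_ge0.
exists lam; split; first by move=> i; case/andP: (lam_bnd i).
split.
  by apply: big1 => i _; apply: penalty_weight_compl.
move=> s Ds; have zs : cdir s by case: Ds.
exists (cproj xi0), (fun i => cproj (xi i)); split; first exact: clarke_subdiff_cproj.
split=> [i|]; first exact: clarke_subdiff_cproj.
have -> : (fun j => cproj xi0 j + \sum_i lam i * cproj (xi i) j) =
    cproj (fun j => xi0 j + \sum_i lam i * xi i j).
  apply/funext => j; rewrite /cproj; case: ifP => // _.
  by rewrite add0r big1 // => i _; rewrite mulr0.
by rewrite vdot_cproj //; exact: lam_kkt.
Qed.

End ClarkeDerivative.

Lemma viol_feasible m (R : realType) n (g : 'I_m -> ('I_n -> R) -> R) y :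
  feasible g y -> viol g y = 0.
Proof. by move=> fy; apply: big1 => i _; rewrite max_l ?fy. Qed.

Theorem mainTheorem9 (R : realType) (n m : nat) (Ic : {set 'I_n})
  (l u : 'I_n -> R) (f : ('I_n -> R) -> R) (g : 'I_m -> ('I_n -> R) -> R) (L : R) :
  (forall i, l i < u i) ->
  (forall i, i \notin Ic -> l i \is a Num.int /\ u i \is a Num.int) ->
  lipschitz_c Ic L f -> (forall i, lipschitz_c Ic L (g i)) ->
  EMFCQ Ic l u g ->
  forall eps : R, 0 < eps ->
  forall xbar : 'I_n -> R,
    clarke_stationary Ic l u (penalty f g eps) xbar ->
    feasible g xbar -> inZ Ic xbar -> inX l u xbar ->
    KKT_stationary Ic l u f g xbar.
Proof.
move=> _ _ hf hg _ eps eps0 xb [xX [zx [stat disc]]] feas _ _.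
have [lam [lam0 [compl kkt]]] := penalty_stationary_multipliers
  (ex_intro _ L hf) (fun i => ex_intro _ L (hg i)) eps0 feas stat.
do 3 (split=> //); exists lam; do 3 (split=> //).
move=> y By fy; have := disc y By.
by rewrite /penalty !viol_feasible // !mulr0 !addr0.
Qed.
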